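(* Let $p,q\in\mathbb{N}$, $a\in\{1,\dots,p\}$, $b\in\{1,\dots,q\}$ and $n\in\mathbb{N}_0$. Set \[ \mathscr N_{p,q,a,b}(n)\coloneq\frac{n+1-\bigl(\frac{2-a}{p}+\frac{2-b}{q}\bigr)}{\frac1p+\frac1q},\qquad d_{b,a}(N)\coloneq\left\lceil\frac{N+2-a}{p}\right\rceil+\left\lceil\frac{N+2-b}{q}\right\rceil-1 . \] (1) For every $N\in\mathbb{N}_0$ with $N\ge\mathscr N_{p,q,a,b}(n)$ one has $n\le d_{b,a}(N)$. (2) Consequently, let $T$ be a semi-infinite complex matrix with $T_{i,j}=0$ whenever $j<i-p$ or $j>i+q$, let $\nu\in\mathbb{C}^{p\times p}$, $\xi\in\mathbb{C}^{q\times q}$ be invertible lower triangular matrices, and let $u_a^\nu,u_b^\xi,e_a^\nu,e_b^\xi$ be as described in the context. Defining $m_{n,a,b}\coloneq u_b^\xi\,T^n\,u_a^\nu$, one has \[ (e_b^\xi)^\top\bigl(T^{[N]}\bigr)^n e_a^\nu=m_{n,a,b}\quad\text{for all } N\in\mathbb{N}_0 \text{ with } N\ge\mathscr N_{p,q,a,b}(n), \] so that $(e_b^\xi)^\top(T^{[N]})^n e_a^\nu$ is independent of $N$ for $N\ge\mathscr N_{p,q,a,b}(n)$.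
   Context: $T^{[N]}=(T_{i,j})_{0\le i,j\le N}$ is the principal truncation of size $N+1$. $u_a^\nu$ is the semi-infinite column vector whose entries with indices $0,\dots,p-1$ are those of $\nu^{-\top}e_a^{[p]}$ and whose other entries are $0$; $u_b^\xi$ is the semi-infinite row vector whose entries with indices $0,\dots,q-1$ are those of $(e_b^{[q]})^\top\xi^{-1}$ and whose other entries are $0$ ($e_a^{[p]}$, $e_b^{[q]}$ standard basis vectors). $e_a^\nu,e_b^\xi\in\mathbb{C}^{N+1}$ are the vectors of entries with indices $0,\dots,N$ of $u_a^\nu$ and $(u_b^\xi)^\top$. Powers of the banded semi-infinite matrix $T$ are ordinary matrix products (finite sums), with $T^0=I$. *)

From HB Require Import structures.
From mathcomp Require Import all_boot all_order all_algebra.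
From mathcomp Require Import reals.
From mathcomp Require Import complex.
Set Implicit Arguments. Unset Strict Implicit. Unset Printing Implicit Defensive.
Import Order.TTheory GRing.Theory Num.Theory.
Local Open Scope ring_scope.

(* Conventions: complex numbers are R[i] for R : realType.
   Indices a, b are 1-based naturals with 1 <= a <= p, 1 <= b <= q. *)

Definition threshN (p q a b n : nat) : rat :=
  (n%:Q + 1 - ((2 - a%:Q) / p%:Q + (2 - b%:Q) / q%:Q)) / (1 / p%:Q + 1 / q%:Q).

Definition dba (p q a b N : nat) : int :=
  Num.ceil ((N%:Q + 2 - a%:Q) / p%:Q) + Num.ceil ((N%:Q + 2 - b%:Q) / q%:Q) - 1.

Definition smat (C : Type) := nat -> nat -> C.

Definition banded (C : nzRingType) (p q : nat) (T : smat C) : Prop :=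
  forall i j : nat, ((j + p < i)%N \/ (i + q < j)%N) -> T i j = 0.

(** Powers of a semi-infinite matrix T with T i k = 0 for k > i + q:
    T^0 = I, T^(n+1) = T * T^n, where the product is the ordinary
    (here finite) sum over k; terms with k > i + q vanish for banded T. *)
Fixpoint spow (C : nzRingType) (q : nat) (T : smat C) (n : nat) : smat C :=
  match n with
  | 0 => fun i j => (i == j)%:R
  | n'.+1 => fun i j => \sum_(k < (i + q).+1) T i k * spow q T n' k j
  end.

Definition evec (C : nzRingType) (p a : nat) : 'cV[C]_p :=
  \col_(i < p) (i.+1 == a)%:R.

Definition ext0 (C : nzRingType) (p : nat) (v : 'cV[C]_p) (i : nat) : C :=
  oapp (fun k : 'I_p => v k 0) 0 (insub i).

Definition u_nu (C : comUnitRingType) (p a : nat) (nu : 'M[C]_p) : nat -> C :=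
  ext0 ((invmx nu)^T *m evec C p a).

Definition u_xi (C : comUnitRingType) (q b : nat) (xi : 'M[C]_q) : nat -> C :=
  ext0 (((evec C q b)^T *m invmx xi)^T).

(** m_{n,a,b} = u_b^xi T^n u_a^nu (finite sum, since u's have finite support). *)
Definition mnab (C : comUnitRingType) (p q a b : nat) (T : smat C)
    (nu : 'M[C]_p) (xi : 'M[C]_q) (n : nat) : C :=
  \sum_(i < q) \sum_(j < p) u_xi b xi i * spow q T n i j * u_nu a nu j.

Definition trunc (C : nzRingType) (N : nat) (T : smat C) : 'M[C]_N.+1 :=
  \matrix_(i, j) T i j.

Definition tvec (C : nzRingType) (N : nat) (u : nat -> C) : 'cV[C]_N.+1 :=
  \col_(i < N.+1) u i.
Arguments mnab {C} p q a b T nu xi n.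

From HB Require Import structures.
From mathcomp Require Import all_boot all_order all_algebra.
From mathcomp Require Import reals.
From mathcomp Require Import complex.
From mathcomp Require Import ring lra zify.
Set Implicit Arguments. Unset Strict Implicit. Unset Printing Implicit Defensive.
Import Order.TTheory GRing.Theory Num.Theory.
Local Open Scope ring_scope.

(* Clearing denominators, N >= threshN p q a b n says exactly that
   (N + 2 - a)/p + (N + 2 - b)/q >= n + 1, and rounding both summands up
   gives part (1).
   For part (2), the inverse of a lower triangular matrix is lower triangular,
   so u_a^nu and u_b^xi vanish beyond the indices a - 1 and b - 1.  An entry
   (T^n)_(i,j) is a sum over paths i = k_0, ..., k_n = j with k_(t+1) <= k_t + q
   and k_t <= k_(t+1) + p, so k_t <= min (i + t q, j + (n - t) p).  For i < b
   and j < a the inequality above forces this minimum to be at most N, hence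
   these paths never leave {0, ..., N} and truncating T changes none of the
   entries that meet the supports of u_a^nu and u_b^xi. *)

Section SupportedSums.

Variable V : nmodType.

Lemma big_ord_widen_eq0 (F : nat -> V) m n : (m <= n)%N ->
  (forall k, (m <= k)%N -> F k = 0) -> \sum_(k < n) F k = \sum_(k < m) F k.
Proof.
move=> le_mn F0; rewrite (big_ord_widen n F le_mn) [RHS]big_mkcond.
by apply: eq_bigr => k _; case: ltnP => // /F0.
Qed.

Lemma big_ord_support (F : nat -> V) m1 m2 :
  (forall k, (m1 <= k)%N -> F k = 0) -> (forall k, (m2 <= k)%N -> F k = 0) ->
  \sum_(k < m1) F k = \sum_(k < m2) F k.
Proof.
move=> F1 F2; have [le12|/ltnW le21] := leqP m1 m2.
  by rewrite (big_ord_widen_eq0 le12 F1).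
by rewrite (big_ord_widen_eq0 le21 F2).
Qed.

Lemma big_ord2_support (F : nat -> nat -> V) m1 n1 m2 n2 :
  (forall i j, (m1 <= i)%N || (n1 <= j)%N -> F i j = 0) ->
  (forall i j, (m2 <= i)%N || (n2 <= j)%N -> F i j = 0) ->
  \sum_(i < m1) \sum_(j < n1) F i j = \sum_(i < m2) \sum_(j < n2) F i j.
Proof.
move=> F1 F2; transitivity (\sum_(i < m1) \sum_(j < n2) F i j).
  by apply: eq_bigr => i _; apply: (big_ord_support (F := F i)) => j nj;
    [apply: F1 | apply: F2]; rewrite nj orbT.
by apply: (big_ord_support (F := fun i => \sum_(j < n2) F i j)) => i mi;
  apply: big1 => j _; [apply: F1 | apply: F2]; rewrite mi.
Qed.

End SupportedSums.

Lemma invmx_trig (F : fieldType) n (A : 'M[F]_n) :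
  is_trig_mx A -> A \in unitmx -> is_trig_mx (invmx A).
Proof.
move=> A_trig A_unit; have /is_trig_mxP A0 := A_trig.
have Aii_neq0 i : A i i != 0.
  by move: A_unit; rewrite unitmxE unitfE det_trig // => /prodf_neq0; apply.
apply/is_trig_mxP.
suff IH m (i j : 'I_n) : (i < m)%N -> (i < j)%N -> invmx A i j = 0.
  by move=> i j; apply: IH (ltnSn i).
elim: m i j => [//|m IH] i j lt_im lt_ij.
have : (A *m invmx A) i j = 0 by rewrite mulmxV // mxE -val_eqE (ltn_eqF lt_ij).
rewrite mxE (bigD1 i) //= big1 ?addr0 => [|k ne_ki].
  by move/eqP; rewrite mulf_eq0 (negbTE (Aii_neq0 i)) => /eqP.
case: (ltngtP i k) => [lt_ik|lt_ki|/val_inj eq_ik]; first by rewrite A0 ?mul0r.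
  by rewrite IH ?mulr0 //; [exact: leq_trans lt_ki lt_im | exact: ltn_trans lt_ij].
by rewrite eq_ik eqxx in ne_ki.
Qed.

Lemma threshN_le_sum (p q a b n N : nat) : (0 < p)%N -> (0 < q)%N ->
  threshN p q a b n <= N%:Q ->
  n%:Q + 1 <= (N%:Q + 2 - a%:Q) / p%:Q + (N%:Q + 2 - b%:Q) / q%:Q.
Proof.
move=> p_gt0 q_gt0; rewrite /threshN.
have pQ : 0 < p%:Q by rewrite ltr0n.
have qQ : 0 < q%:Q by rewrite ltr0n.
rewrite ler_pdivrMr ?addr_gt0 ?divr_gt0 // => le_thresh.
suff -> : (N%:Q + 2 - a%:Q) / p%:Q + (N%:Q + 2 - b%:Q) / q%:Q =
   N%:Q * (1 / p%:Q + 1 / q%:Q) + ((2 - a%:Q) / p%:Q + (2 - b%:Q) / q%:Q).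
  by rewrite -lerBlDr.
by field; rewrite !lt0r_neq0.
Qed.

Lemma threshN_le_dba (p q a b n N : nat) : (0 < p)%N -> (0 < q)%N ->
  threshN p q a b n <= N%:Q -> n%:Z <= dba p q a b N.
Proof.
move=> p_gt0 q_gt0 /(threshN_le_sum p_gt0 q_gt0).
rewrite /dba; set X := (_ / p%:Q); set Y := (_ / q%:Q) => le_nXY.
rewrite -ltzD1 subrK -(ltr_int rat) intrD.
apply: lt_le_trans (lerD (ceil_ge X) (ceil_ge Y)).
by apply: lt_le_trans le_nXY; rewrite ltrDl.
Qed.

(* The position at step t of a path from i to j along the nonzero entries of a
   (p, q)-banded matrix is at most min (i + t q, j + (n - t) p). *)
Definition band_confined (p q N n i j : nat) : Prop :=
  forall t, (t <= n)%N -> (i + t * q <= N)%N || (j + (n - t) * p <= N)%N.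

Lemma band_confinedS p q N n i j k : (k <= i + q)%N ->
  band_confined p q N n.+1 i j -> band_confined p q N n k j.
Proof.
move=> le_kiq conf t le_tn; have := conf t.+1 le_tn; rewrite subSS mulSn.
by case/orP => h; apply/orP; [left | right]; lia.
Qed.

Lemma threshN_band_confined (p q a b n N i j : nat) : (0 < p)%N -> (0 < q)%N ->
  threshN p q a b n <= N%:Q -> (i < b)%N -> (j < a)%N ->
  band_confined p q N n i j.
Proof.
move=> p_gt0 q_gt0 /(threshN_le_sum p_gt0 q_gt0) le_nXY lt_ib lt_ja t le_tn.
apply/negPn/negP; rewrite negb_or -!ltnNge => /andP[ltNi ltNj].
have : (N + 2 <= b + t * q)%N /\ (N + 2 <= a + (n - t) * p)%N by lia.
rewrite -!(ler_nat rat) !natrD !natrM natrB // => -[le_b le_a].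
have le_t : (N%:Q + 2 - b%:Q) / q%:Q <= t%:Q by rewrite ler_pdivrMr ?ltr0n //; lra.
have le_nt : (N%:Q + 2 - a%:Q) / p%:Q <= n%:Q - t%:Q.
  by rewrite ler_pdivrMr ?ltr0n //; lra.
lra.
Qed.

Section BandedPowers.

Variables (C : nzRingType) (p q : nat) (T : smat C).
Hypothesis T_banded : banded p q T.

Lemma spow_banded n : banded (n * p) (n * q) (spow q T n).
Proof.
elim: n => [|n IH] i j /=.
  by rewrite !mul0n !addn0 => -[/gtn_eqF | /ltn_eqF] ->.
move=> out_band; apply: big1 => k _.
have [lt_kpi | le_ikp] := ltnP (k + p) i; first by rewrite T_banded ?mul0r //; left.
rewrite IH ?mulr0 //; rewrite !mulSn in out_band.
by case: out_band => ?; [left | right]; have := ltn_ord k; lia.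
Qed.

Lemma spow_confined_out_eq0 N n i j : band_confined p q N n i j ->
  (N < i)%N || (N < j)%N -> spow q T n i j = 0.
Proof.
move=> conf /orP[ltNi | ltNj].
  have := conf 0%N isT; rewrite subn0 mul0n addn0 leqNgt ltNi /= => le_jN.
  by apply: spow_banded; left; lia.
have := conf n (leqnn n); rewrite subnn mul0n addn0 (leqNgt j) ltNj orbF => le_iN.
by apply: spow_banded; right; lia.
Qed.

Lemma trunc_spow N n (i j : 'I_N.+1) : band_confined p q N n i j ->
  (trunc N T ^+ n) i j = spow q T n i j.
Proof.
elim: n i => [|n IH] i conf; first by rewrite expr0 !mxE.
rewrite exprS -mulmxE mxE /=.
transitivity (\sum_(k < N.+1) T i k * spow q T n k j).
  apply: eq_bigr => k _; rewrite mxE.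
  have [le_kiq | lt_iqk] := leqP k (i + q); last by rewrite T_banded ?mul0r //; right.
  by rewrite (IH k (band_confinedS le_kiq conf)).
apply: (big_ord_support (F := fun k => T i k * spow q T n k j)) => k le_k.
  have [le_kiq | lt_iqk] := leqP k (i + q); last by rewrite T_banded ?mul0r //; right.
  by rewrite (spow_confined_out_eq0 (band_confinedS le_kiq conf)) ?mulr0 ?le_k.
by rewrite T_banded ?mul0r //; right.
Qed.

End BandedPowers.

Lemma u_nu_eq0 (F : fieldType) p a (nu : 'M[F]_p) j :
  is_trig_mx nu -> nu \in unitmx -> (a <= j)%N -> u_nu a nu j = 0.
Proof.
move=> nu_trig nu_unit le_aj; rewrite /u_nu /ext0.
case: insubP => [k _ val_k | //] /=; rewrite mxE big1 // => l _; rewrite !mxE.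
have [Sl_a | _] := eqVneq l.+1 a; last by rewrite mulr0.
have /is_trig_mxP -> // := invmx_trig nu_trig nu_unit; first by rewrite mul0r.
by rewrite Sl_a val_k.
Qed.

Lemma u_xi_eq0 (F : fieldType) q b (xi : 'M[F]_q) i :
  is_trig_mx xi -> xi \in unitmx -> (b <= i)%N -> u_xi b xi i = 0.
Proof.
move=> xi_trig xi_unit le_bi; rewrite /u_xi /ext0.
case: insubP => [k _ val_k | //] /=; rewrite !mxE big1 // => l _; rewrite !mxE.
have [Sl_b | _] := eqVneq l.+1 b; last by rewrite mul0r.
have /is_trig_mxP -> // := invmx_trig xi_trig xi_unit; first by rewrite mulr0.
by rewrite Sl_b val_k.
Qed.

Theorem lemma2 (p q a b n : nat)
  (ha : (1 <= a <= p)%N) (hb : (1 <= b <= q)%N) :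
  (forall N : nat, threshN p q a b n <= N%:Q -> n%:Z <= dba p q a b N) /\
  (forall (R : realType) (T : smat R[i]) (nu : 'M[R[i]]_p) (xi : 'M[R[i]]_q),
     banded p q T ->
     is_trig_mx nu -> nu \in unitmx ->
     is_trig_mx xi -> xi \in unitmx ->
     forall N : nat, threshN p q a b n <= N%:Q ->
       (((tvec N (u_xi b xi))^T *m (trunc N T) ^+ n *m tvec N (u_nu a nu)) 0 0
        = mnab p q a b T nu xi n)).
Proof.
have p_gt0 : (0 < p)%N by case/andP: ha; exact: leq_trans.
have q_gt0 : (0 < q)%N by case/andP: hb; exact: leq_trans.
split=> [N | R T nu xi T_banded nu_trig nu_unit xi_trig xi_unit N] le_thN.
  exact: threshN_le_dba.
have conf i j : (i < b)%N -> (j < a)%N -> band_confined p q N n i j.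
  exact: threshN_band_confined p_gt0 q_gt0 le_thN.
have u_eq0 i j (x : R[i]) : ~~ ((i < b) && (j < a))%N ->
    u_xi b xi i * x * u_nu a nu j = 0.
  rewrite negb_and -!leqNgt => /orP[le_bi | le_aj].
    by rewrite u_xi_eq0 ?mul0r.
  by rewrite u_nu_eq0 ?mulr0.
pose G i j := u_xi b xi i * spow q T n i j * u_nu a nu j.
transitivity (\sum_(i < N.+1) \sum_(j < N.+1) G i j).
  rewrite -mulmxA mxE; apply: eq_bigr => i _; rewrite !mxE big_distrr.
  apply: eq_bigr => j _; rewrite !mxE /= mulrA /G.
  have [/andP[lt_ib lt_ja] | out_ab] := boolP ((i < b) && (j < a))%N.
    by rewrite (trunc_spow T_banded (conf i j lt_ib lt_ja)).
  by rewrite !u_eq0.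
apply: big_ord2_support => i j out; last by apply: u_eq0; lia.
have [/andP[lt_ib lt_ja] | out_ab] := boolP ((i < b) && (j < a))%N; last exact: u_eq0.
by rewrite /G (spow_confined_out_eq0 T_banded (conf i j lt_ib lt_ja) out) mulr0 mul0r.
Qed.
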